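(* Let $T$ be a positive integer, let $N=(N_l)_{0\le l\le T}$ satisfy $N_0=0$ with increments $N_{l+1}-N_l$ independent Poisson random variables with parameters $\gamma_l\ge0$, $0\le l\le T-1$, let $\mathfrak{F}=(\mathfrak{F}_k)$ be the natural augmented filtration of $N$, $I_k=I_0(-1)^{N_k}$ with $I_0\in\{-1,1\}$ deterministic, and for $1\le l\le T$ let $u_l=\frac12(1+e^{-2\gamma_{l-1}})$, $v_l=\frac12(1-e^{-2\gamma_{l-1}})$. For $0\le k\le T$ define $$Q_k=\sup_{\tau\in\mathcal{T}^k}\mathbb{E}_k\Big[\sum_{\ell=k+1}^{T}\big(\mathbf{1}_{I_\ell=-1}-\mathbf{1}_{I_\ell=1}\big)\mathbf{1}_{\ell\le\tau}\Big],$$ where $\mathcal{T}^k$ is the set of $\mathfrak{F}$-stopping times with values in $\{k,\dots,T\}$. Then $Q_k=Q(k,I_k)$, where $Q:\{0,\dots,T\}\times\{1,-1\}\to\mathbb{R}$ is given by $Q(T,\pm1)=0$ and, for $0\le k<T$, $$Q(k,-1)=e^{-2\gamma_k}+v_{k+1}Q(k+1,1)+u_{k+1}Q(k+1,-1)>0,$$ $$Q(k,1)=\max\big(0,\,-e^{-2\gamma_k}+u_{k+1}Q(k+1,1)+v_{k+1}Q(k+1,-1)\big).$$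
   Context: $\mathbb{E}_k$ denotes conditional expectation given $\mathfrak{F}_k$. *)

From Stdlib Require Import Reals Lra Lia List Arith.
From Coquelicot Require Import Coquelicot.
Open Scope R_scope.

(* Canonical sample space: omega i = N_{i+1} - N_i, the i-th increment
   (only coordinates i < T are relevant). *)
Definition Omega := nat -> nat.

Definition poisson_pmf (g : R) (n : nat) : R :=
  exp (- g) * g ^ n / INR (fact n).

Definition upd (w : Omega) (s n : nat) : Omega :=
  fun i => if Nat.eqb i s then n else w i.

(* Integrate out coordinates s, s+1, ..., s+m-1 against the independent
   Poisson(gamma_i) laws (iterated series = product measure). *)
Fixpoint ExpFrom (gamma : nat -> R) (m s : nat) (f : Omega -> R) (w : Omega) : R :=
  match m with
  | O => f w
  | S m' => Series (fun n => poisson_pmf (gamma s) n *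
                             ExpFrom gamma m' (S s) f (upd w s n))
  end.

Definition Expect (gamma : nat -> R) (T : nat) (f : Omega -> R) : R :=
  ExpFrom gamma T 0 f (fun _ => 0%nat).

Fixpoint Nproc (k : nat) (w : Omega) : nat :=
  match k with O => 0%nat | S k' => (Nproc k' w + w k')%nat end.

Definition Iproc (I0 : R) (k : nat) (w : Omega) : R := I0 * (-1) ^ (Nproc k w).

Definition ind (b : bool) : R := if b then 1 else 0.

(* tau is a stopping time of the natural filtration of N with values in
   {k, ..., T}: {tau <= j} is determined by N_0..N_j, i.e. by the first
   j increments. *)
Definition stopping_time_in (T k : nat) (tau : Omega -> nat) : Prop :=
  (forall w, (k <= tau w <= T)%nat) /\
  (forall (j : nat) (w w' : Omega),
      (forall i, (i < j)%nat -> w i = w' i) ->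
      ((tau w <= j)%nat <-> (tau w' <= j)%nat)).

Definition payoff (I0 : R) (T k : nat) (tau : Omega -> nat) (w : Omega) : R :=
  fold_right Rplus 0
    (map (fun l =>
            ((if Req_EM_T (Iproc I0 l w) (-1) then 1 else 0)
             - (if Req_EM_T (Iproc I0 l w) 1 then 1 else 0))
            * ind (Nat.leb l (tau w)))
         (seq (S k) (T - k))).

(* Indicator of the atom {N_1..N_k determined by the history h} of F_k,
   i.e. {omega i = h i for i < k}. *)
Definition atom (k : nat) (h : Omega) (w : Omega) : R :=
  ind (forallb (fun i => Nat.eqb (w i) (h i)) (seq 0 k)).

(* Conditional expectation E_k[X] on the atom of F_k given by h
   (F_k is generated by countably many atoms). *)
Definition CondExp (gamma : nat -> R) (T k : nat) (X : Omega -> R) (h : Omega) : R :=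
  Expect gamma T (fun w => X w * atom k h w) / Expect gamma T (atom k h).

(* The function Q : {0..T} x {1,-1} -> R; Qaux m = (Q(T-m,1), Q(T-m,-1)). *)
Fixpoint Qaux (gamma : nat -> R) (T m : nat) : R * R :=
  match m with
  | O => (0, 0)
  | S m' =>
      let k := (T - S m')%nat in
      let p := Qaux gamma T m' in
      let e := exp (-2 * gamma k) in
      let u := (1 + e) / 2 in
      let v := (1 - e) / 2 in
      (Rmax 0 (- e + u * fst p + v * snd p),
       e + v * fst p + u * snd p)
  end.

Definition Qfun (gamma : nat -> R) (T k : nat) (s : R) : R :=
  let p := Qaux gamma T (T - k) in
  if Req_EM_T s 1 then fst p else snd p.

From Pilot Require Import Defs.
From Stdlib Require Import Reals Lra Lia List Arith FunctionalExtensionality.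
From Coquelicot Require Import Coquelicot.
Open Scope R_scope.

(* Stopping at time k yields 0, while continuing yields the
   reward of the step k -> k+1 plus, playing optimally afterwards, Q(k+1, I_{k+1});
   hence Q(k, s) = max(0, C(k, s)) with C the one-step expectation. Since
   I_{k+1} = I_k (-1)^n with n ~ Poisson(gamma_k) and E[(-1)^n] = e^{-2 gamma_k},
   the state is kept with probability u_{k+1} and flipped with probability v_{k+1},
   which is the stated recursion; from state -1 the expected immediate reward is
   e^{-2 gamma_k} > 0, so there continuing is optimal. The stopping time that
   continues exactly while C(k, I_k) > 0 attains Q. Conditioning on an atom of F_k
   fixes the first k increments, so E_k is integration over the remaining ones. *)

Lemma is_series_exp (x : R) : is_series (fun n => x ^ n / INR (fact n)) (exp x).
Proof.
  eapply is_series_ext; [|exact (is_exp_Reals x)].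
  intro n. simpl. rewrite pow_n_pow. unfold scal; simpl. unfold mult; simpl.
  unfold Rdiv. ring.
Qed.

Lemma is_series_poisson_pmf (g : R) : is_series (poisson_pmf g) 1.
Proof.
  replace 1 with (exp (- g) * exp g)
    by (rewrite <- exp_plus, Rplus_opp_l; apply exp_0).
  eapply is_series_ext; [|exact (is_series_scal_l (exp (- g)) _ _ (is_series_exp g))].
  intro n. unfold poisson_pmf, scal; simpl; unfold mult; simpl. unfold Rdiv. ring.
Qed.

Lemma is_series_poisson_pmf_sign (g : R) :
  is_series (fun n => poisson_pmf g n * (-1) ^ n) (exp (-2 * g)).
Proof.
  replace (exp (-2 * g)) with (exp (- g) * exp (- g))
    by (rewrite <- exp_plus; f_equal; ring).
  eapply is_series_ext; [|exact (is_series_scal_l (exp (- g)) _ _ (is_series_exp (- g)))].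
  intro n. unfold poisson_pmf, scal; simpl; unfold mult; simpl.
  replace (- g) with (-1 * g) at 2 by ring. rewrite Rpow_mult_distr. unfold Rdiv. ring.
Qed.

Lemma poisson_pmf_ge0 (g : R) (n : nat) : 0 <= g -> 0 <= poisson_pmf g n.
Proof.
  intro Hg. unfold poisson_pmf, Rdiv. apply Rmult_le_pos.
  - apply Rmult_le_pos; [left; apply exp_pos | apply pow_le; exact Hg].
  - left. apply Rinv_0_lt_compat, INR_fact_lt_0.
Qed.

Section PoissonSeries.

Variables (g M : R) (a : nat -> R).
Hypothesis g_ge0 : 0 <= g.
Hypothesis a_bounded : forall n, Rabs (a n) <= M.

Let abs_poisson_term_le n : Rabs (poisson_pmf g n * a n) <= poisson_pmf g n * M.
Proof.
  rewrite Rabs_mult, (Rabs_pos_eq (poisson_pmf g n)) by (apply poisson_pmf_ge0; exact g_ge0).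
  apply Rmult_le_compat_l; [apply poisson_pmf_ge0; exact g_ge0 | apply a_bounded].
Qed.

Let ex_series_poisson_const : ex_series (fun n => poisson_pmf g n * M).
Proof. exists (1 * M). apply is_series_scal_r, is_series_poisson_pmf. Qed.

Lemma ex_series_poisson_bounded : ex_series (fun n => poisson_pmf g n * a n).
Proof.
  apply (@ex_series_le R_AbsRing R_CompleteNormedModule _ _ abs_poisson_term_le).
  exact ex_series_poisson_const.
Qed.

Lemma Series_poisson_abs_le : Rabs (Series (fun n => poisson_pmf g n * a n)) <= M.
Proof.
  eapply Rle_trans.
  { apply Series_Rabs.
    apply (@ex_series_le R_AbsRing R_CompleteNormedModule _ (fun n => poisson_pmf g n * M)).
    - intro n. change norm with Rabs. simpl. rewrite Rabs_Rabsolu. apply abs_poisson_term_le.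
    - exact ex_series_poisson_const. }
  eapply Rle_trans.
  { apply Series_le; [|exact ex_series_poisson_const].
    intro n. split; [apply Rabs_pos | apply abs_poisson_term_le]. }
  rewrite Series_scal_r, (is_series_unique _ _ (is_series_poisson_pmf g)). lra.
Qed.

End PoissonSeries.

Lemma Series_poisson_le (g Ma Mb : R) (a b : nat -> R) :
  0 <= g -> (forall n, Rabs (a n) <= Ma) -> (forall n, Rabs (b n) <= Mb) ->
  (forall n, a n <= b n) ->
  Series (fun n => poisson_pmf g n * a n) <= Series (fun n => poisson_pmf g n * b n).
Proof.
  intros Hg Ha Hb Hab.
  assert (Ea := ex_series_poisson_bounded g Ma a Hg Ha).
  assert (Eb := ex_series_poisson_bounded g Mb b Hg Hb).
  enough (0 <= Series (fun n => poisson_pmf g n * b n - poisson_pmf g n * a n))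
    by (rewrite Series_minus in *; auto; lra).
  replace 0 with (Series (fun _ => 0))
    by (rewrite (Series_ext _ (fun n => 0 * 0)), Series_scal_l by (intro; ring); ring).
  apply Series_le; [|exact (ex_series_minus _ _ Eb Ea)].
  intro n. pose proof (poisson_pmf_ge0 g n Hg). pose proof (Hab n). split; nra.
Qed.

Definition agree_outside (s m : nat) (w w' : Omega) : Prop :=
  forall i, (i < s \/ s + m <= i)%nat -> w' i = w i.

Definition nonneg_on (gamma : nat -> R) (s m : nat) : Prop :=
  forall i, (s <= i < s + m)%nat -> 0 <= gamma i.

Section ExpFrom.

Variable gamma : nat -> R.

Lemma ExpFrom_ext (m s : nat) (f g : Omega -> R) (w : Omega) :
  (forall w', agree_outside s m w w' -> f w' = g w') ->
  ExpFrom gamma m s f w = ExpFrom gamma m s g w.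
Proof.
  revert s f g w; induction m as [|m IH]; intros s f g w H; simpl.
  - apply H. intros i _. reflexivity.
  - apply Series_ext. intro n. f_equal. apply IH. intros w' Hw'. apply H.
    intros i Hi. rewrite Hw' by lia. unfold upd.
    destruct (Nat.eqb_spec i s); [lia | reflexivity].
Qed.

Lemma ExpFrom_scal_l (m s : nat) (c : R) (f : Omega -> R) (w : Omega) :
  ExpFrom gamma m s (fun w => c * f w) w = c * ExpFrom gamma m s f w.
Proof.
  revert s w; induction m as [|m IH]; intros s w; simpl; [reflexivity|].
  rewrite <- Series_scal_l. apply Series_ext. intro n. rewrite IH. ring.
Qed.

Lemma ExpFrom_const (m s : nat) (c : R) (w : Omega) : ExpFrom gamma m s (fun _ => c) w = c.
Proof.
  revert s w; induction m as [|m IH]; intros s w; simpl; [reflexivity|].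
  rewrite (Series_ext _ (fun n => poisson_pmf (gamma s) n * c)) by (intro; rewrite IH; reflexivity).
  rewrite Series_scal_r, (is_series_unique _ _ (is_series_poisson_pmf _)). ring.
Qed.

Lemma ExpFrom_add (a b s : nat) (f : Omega -> R) (w : Omega) :
  ExpFrom gamma (a + b) s f w = ExpFrom gamma a s (ExpFrom gamma b (s + a) f) w.
Proof.
  revert s w; induction a as [|a IH]; intros s w; simpl.
  - rewrite Nat.add_0_r. reflexivity.
  - apply Series_ext. intro n. rewrite IH, Nat.add_succ_r. reflexivity.
Qed.

Lemma ExpFrom_abs_le (m s : nat) (f : Omega -> R) (M : R) :
  nonneg_on gamma s m -> (forall w, Rabs (f w) <= M) ->
  forall w, Rabs (ExpFrom gamma m s f w) <= M.
Proof.
  revert s; induction m as [|m IH]; intros s Hg Hf w; simpl; [apply Hf|].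
  apply Series_poisson_abs_le; [apply Hg; lia|].
  intro n. apply IH; [intros i Hi; apply Hg; lia | exact Hf].
Qed.

Lemma ExpFrom_plus (m s : nat) (f g : Omega -> R) (Mf Mg : R) :
  nonneg_on gamma s m -> (forall w, Rabs (f w) <= Mf) -> (forall w, Rabs (g w) <= Mg) ->
  forall w, ExpFrom gamma m s (fun w => f w + g w) w
            = ExpFrom gamma m s f w + ExpFrom gamma m s g w.
Proof.
  revert s; induction m as [|m IH]; intros s Hg Hf Hgb w; simpl; [reflexivity|].
  assert (Hg' : nonneg_on gamma (S s) m) by (intros i Hi; apply Hg; lia).
  assert (Hs : 0 <= gamma s) by (apply Hg; lia).
  rewrite <- Series_plus.
  - apply Series_ext. intro n. rewrite (IH _ Hg' Hf Hgb). ring.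
  - apply (ex_series_poisson_bounded _ Mf _ Hs). intro n. apply ExpFrom_abs_le; auto.
  - apply (ex_series_poisson_bounded _ Mg _ Hs). intro n. apply ExpFrom_abs_le; auto.
Qed.

Lemma ExpFrom_1_le (s : nat) (f g : Omega -> R) (Mf Mg : R) :
  0 <= gamma s -> (forall w, Rabs (f w) <= Mf) -> (forall w, Rabs (g w) <= Mg) ->
  (forall w, f w <= g w) -> forall w, ExpFrom gamma 1 s f w <= ExpFrom gamma 1 s g w.
Proof. intros Hs Hf Hg Hfg w. apply (Series_poisson_le _ Mf Mg); auto. Qed.

End ExpFrom.

Lemma Nproc_ext (k : nat) (w w' : Omega) :
  (forall i, (i < k)%nat -> w i = w' i) -> Nproc k w = Nproc k w'.
Proof.
  revert w w'; induction k as [|k IH]; intros w w' H; simpl; [reflexivity|].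
  rewrite (IH w w') by (intros; apply H; lia). rewrite (H k) by lia. reflexivity.
Qed.

Lemma Iproc_ext (I0 : R) (k : nat) (w w' : Omega) :
  (forall i, (i < k)%nat -> w i = w' i) -> Iproc I0 k w = Iproc I0 k w'.
Proof. intro H. unfold Iproc. rewrite (Nproc_ext k w w' H). reflexivity. Qed.

Lemma pow_m1_sign (n : nat) : (-1) ^ n = 1 \/ (-1) ^ n = -1.
Proof.
  induction n as [|n IH]; simpl; [left; ring|].
  destruct IH as [-> | ->]; [right | left]; ring.
Qed.

Lemma Iproc_sign (I0 : R) (k : nat) (w : Omega) :
  I0 = 1 \/ I0 = -1 -> Iproc I0 k w = 1 \/ Iproc I0 k w = -1.
Proof.
  intro H. unfold Iproc.
  destruct (pow_m1_sign (Nproc k w)) as [-> | ->]; destruct H as [-> | ->];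
    [left | right | right | left]; ring.
Qed.

Lemma Iproc_S_upd (I0 : R) (k : nat) (w : Omega) (n : nat) :
  Iproc I0 (S k) (upd w k n) = Iproc I0 k w * (-1) ^ n.
Proof.
  unfold Iproc. simpl. rewrite pow_add.
  rewrite (Nproc_ext k (upd w k n) w).
  - unfold upd. rewrite Nat.eqb_refl. ring.
  - intros i Hi. unfold upd. destruct (Nat.eqb_spec i k); [lia | reflexivity].
Qed.

(* Split G into its even and odd parts in the sign; only the odd part sees the
   increment, through E[(-1)^n] = e^{-2 gamma_k}. *)
Lemma ExpFrom_1_Iproc (gamma : nat -> R) (I0 : R) (k : nat) (G : R -> R) (w : Omega) :
  ExpFrom gamma 1 k (fun w => G (Iproc I0 (S k) w)) w =
  (1 + exp (-2 * gamma k)) / 2 * G (Iproc I0 k w)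
  + (1 - exp (-2 * gamma k)) / 2 * G (- Iproc I0 k w).
Proof.
  simpl. set (s := Iproc I0 k w).
  set (even := (G s + G (- s)) / 2). set (odd := (G s - G (- s)) / 2).
  rewrite (Series_ext _ (fun n => poisson_pmf (gamma k) n * even
                                  + odd * (poisson_pmf (gamma k) n * (-1) ^ n))).
  2:{ intro n. rewrite Iproc_S_upd. fold s. unfold even, odd.
      destruct (pow_m1_sign n) as [-> | ->];
        [rewrite Rmult_1_r | replace (s * -1) with (- s) by ring]; field. }
  rewrite Series_plus.
  - rewrite Series_scal_r, Series_scal_l, (is_series_unique _ _ (is_series_poisson_pmf _)),
      (is_series_unique _ _ (is_series_poisson_pmf_sign _)).
    unfold even, odd. field.
  - exists (1 * even). apply is_series_scal_r, is_series_poisson_pmf.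
  - exists (odd * exp (-2 * gamma k)). exact (is_series_scal_l odd _ _ (is_series_poisson_pmf_sign _)).
Qed.

Definition reward (s : R) : R :=
  (if Req_EM_T s (-1) then 1 else 0) - (if Req_EM_T s 1 then 1 else 0).

Lemma reward_1 : reward 1 = -1.
Proof. unfold reward. destruct (Req_EM_T 1 (-1)); [lra|]. destruct (Req_EM_T 1 1); lra. Qed.

Lemma reward_m1 : reward (-1) = 1.
Proof. unfold reward. destruct (Req_EM_T (-1) (-1)); [|lra]. destruct (Req_EM_T (-1) 1); lra. Qed.

Lemma reward_abs_le (s : R) : Rabs (reward s) <= 1.
Proof. unfold reward. destruct (Req_EM_T s (-1)), (Req_EM_T s 1); apply Rabs_le; lra. Qed.

Section Payoff.

Variables (I0 : R) (T : nat).

Lemma payoff_unfold (k : nat) (tau : Omega -> nat) (w : Omega) :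
  payoff I0 T k tau w =
  fold_right Rplus 0
    (map (fun l => reward (Iproc I0 l w) * Defs.ind (Nat.leb l (tau w))) (seq (S k) (T - k))).
Proof. reflexivity. Qed.

Lemma payoff_stop_ext (k : nat) (tau tau' : Omega -> nat) (w : Omega) :
  tau w = tau' w -> payoff I0 T k tau w = payoff I0 T k tau' w.
Proof. intro H. rewrite !payoff_unfold, H. reflexivity. Qed.

Lemma payoff_stopped (k : nat) (tau : Omega -> nat) (w : Omega) :
  (tau w <= k)%nat -> payoff I0 T k tau w = 0.
Proof.
  intro H. rewrite payoff_unfold.
  assert (Hst : (tau w < S k)%nat) by lia.
  revert Hst. generalize (S k) as st, (T - k)%nat as len.
  intros st len; revert st.
  induction len as [|len IH]; intros st Hst; simpl; [reflexivity|].
  rewrite IH by lia. destruct (Nat.leb_spec st (tau w)); [lia|]. unfold Defs.ind. ring.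
Qed.

Lemma payoff_cons (k : nat) (tau : Omega -> nat) (w : Omega) : (k < T)%nat ->
  payoff I0 T k tau w
  = reward (Iproc I0 (S k) w) * Defs.ind (Nat.leb (S k) (tau w)) + payoff I0 T (S k) tau w.
Proof.
  intro H. rewrite !payoff_unfold. replace (T - k)%nat with (S (T - S k)) by lia.
  reflexivity.
Qed.

Lemma payoff_abs_le (k : nat) (tau : Omega -> nat) (w : Omega) :
  Rabs (payoff I0 T k tau w) <= INR T.
Proof.
  rewrite payoff_unfold. apply Rle_trans with (INR (T - k)); [|apply le_INR; lia].
  generalize (S k) as st, (T - k)%nat as len. intros st len; revert st.
  induction len as [|len IH]; intro st; cbn [seq map fold_right].
  - rewrite Rabs_R0. simpl. lra.
  - eapply Rle_trans; [apply Rabs_triang|]. rewrite S_INR. specialize (IH (S st)).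
    enough (Rabs (reward (Iproc I0 st w) * Defs.ind (Nat.leb st (tau w))) <= 1) by lra.
    rewrite Rabs_mult. unfold Defs.ind. destruct (Nat.leb st (tau w)).
    + rewrite Rabs_R1, Rmult_1_r. apply reward_abs_le.
    + rewrite Rabs_R0, Rmult_0_r. lra.
Qed.

End Payoff.

Lemma forallb_ext_in {A : Type} (f g : A -> bool) (l : list A) :
  (forall x, In x l -> f x = g x) -> forallb f l = forallb g l.
Proof.
  induction l as [|a l IH]; intro H; simpl; [reflexivity|].
  rewrite (H a) by (left; reflexivity). rewrite IH by (intros; apply H; right; assumption).
  reflexivity.
Qed.

Lemma atom_ext (k : nat) (h w w' : Omega) :
  (forall i, (i < k)%nat -> w i = w' i) -> atom k h w = atom k h w'.
Proof.
  intro H. unfold atom. f_equal. apply forallb_ext_in. intros i Hi.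
  apply in_seq in Hi. rewrite H by lia. reflexivity.
Qed.

Lemma atom_neq0 (k : nat) (h w : Omega) :
  atom k h w <> 0 -> forall i, (i < k)%nat -> w i = h i.
Proof.
  unfold atom, Defs.ind. destruct (forallb _ _) eqn:E; [|lra]. intros _ i Hi.
  rewrite forallb_forall in E. apply Nat.eqb_eq, E, in_seq. lia.
Qed.

Lemma exp_m2_bounds (g : R) : 0 <= g -> 0 < exp (-2 * g) <= 1.
Proof.
  intro Hg. split; [apply exp_pos|]. rewrite <- exp_0.
  destruct (Req_dec g 0) as [-> | Hn].
  - rewrite Rmult_0_r. lra.
  - left. apply exp_increasing. lra.
Qed.

Lemma Qfun_1 (gamma : nat -> R) (T k : nat) : Qfun gamma T k 1 = fst (Qaux gamma T (T - k)).
Proof. unfold Qfun. destruct (Req_EM_T 1 1); [reflexivity | lra]. Qed.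

Lemma Qfun_m1 (gamma : nat -> R) (T k : nat) : Qfun gamma T k (-1) = snd (Qaux gamma T (T - k)).
Proof. unfold Qfun. destruct (Req_EM_T (-1) 1); [lra | reflexivity]. Qed.

Lemma Qfun_T (gamma : nat -> R) (T : nat) (s : R) : Qfun gamma T T s = 0.
Proof. unfold Qfun. rewrite Nat.sub_diag. simpl. destruct (Req_EM_T s 1); reflexivity. Qed.

(* C(k, s): I_{k+1} = s with probability u_{k+1} and -s with probability v_{k+1}. *)
Definition continuation (gamma : nat -> R) (T k : nat) (s : R) : R :=
  (1 + exp (-2 * gamma k)) / 2 * (reward s + Qfun gamma T (S k) s)
  + (1 - exp (-2 * gamma k)) / 2 * (reward (- s) + Qfun gamma T (S k) (- s)).

Section Qfun.

Variables (gamma : nat -> R) (T : nat).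
Hypothesis T_pos : (0 < T)%nat.
Hypothesis gamma_ge0 : forall l, (l < T)%nat -> 0 <= gamma l.

Let weights_ge0 (k : nat) (a b : R) : (k < T)%nat -> 0 <= a -> 0 <= b ->
  0 <= (1 + exp (-2 * gamma k)) / 2 * a /\ 0 <= (1 - exp (-2 * gamma k)) / 2 * b.
Proof.
  intros Hk Ha Hb. pose proof (exp_m2_bounds _ (gamma_ge0 k Hk)).
  split; apply Rmult_le_pos; lra.
Qed.

Lemma Qaux_ge0 (m : nat) : 0 <= fst (Qaux gamma T m) /\ 0 <= snd (Qaux gamma T m).
Proof.
  induction m as [|m [IH1 IH2]]; simpl; [lra|]. split; [apply Rmax_l|].
  assert (Hk : (T - S m < T)%nat) by lia.
  pose proof (exp_m2_bounds _ (gamma_ge0 _ Hk)).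
  pose proof (weights_ge0 _ _ _ Hk IH2 IH1). lra.
Qed.

Lemma Qfun_m1_pos (k : nat) : (k < T)%nat -> 0 < Qfun gamma T k (-1).
Proof.
  intro Hk. rewrite Qfun_m1. replace (T - k)%nat with (S (T - S k)) by lia. simpl.
  replace (T - S (T - S k))%nat with k by lia.
  destruct (Qaux_ge0 (T - S k)) as [H1 H2].
  pose proof (exp_m2_bounds _ (gamma_ge0 k Hk)).
  pose proof (weights_ge0 _ _ _ Hk H2 H1). lra.
Qed.

Lemma Qfun_ge0 (k : nat) (s : R) : 0 <= Qfun gamma T k s.
Proof. pose proof (Qaux_ge0 (T - k)). unfold Qfun. destruct (Req_EM_T s 1); tauto. Qed.

Lemma Qfun_abs_le (k : nat) (s : R) :
  Rabs (Qfun gamma T k s) <= fst (Qaux gamma T (T - k)) + snd (Qaux gamma T (T - k)).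
Proof.
  pose proof (Qaux_ge0 (T - k)). rewrite Rabs_pos_eq by apply Qfun_ge0.
  unfold Qfun. destruct (Req_EM_T s 1); lra.
Qed.

(* For s = -1 the max is not in Qaux: there the continuation value is already >= 0. *)
Lemma Qfun_bellman (k : nat) (s : R) : (k < T)%nat -> s = 1 \/ s = -1 ->
  Qfun gamma T k s = Rmax 0 (continuation gamma T k s).
Proof.
  intros Hk Hs. unfold continuation.
  assert (Hstep : (T - k = S (T - S k))%nat) by lia.
  destruct (Qaux_ge0 (T - S k)) as [H1 H2].
  destruct Hs as [-> | ->].
  - replace (Ropp 1) with (-1) by ring.
    rewrite reward_1, reward_m1, !Qfun_1, !Qfun_m1, Hstep. simpl.
    replace (T - S (T - S k))%nat with k by lia. f_equal. lra.
  - replace (Ropp (-1)) with 1 by ring.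
    rewrite reward_1, reward_m1, !Qfun_1, !Qfun_m1, Hstep. simpl.
    replace (T - S (T - S k))%nat with k by lia.
    pose proof (weights_ge0 _ _ _ Hk H2 H1). pose proof (exp_m2_bounds _ (gamma_ge0 k Hk)).
    rewrite Rmax_right; lra.
Qed.

End Qfun.

Lemma stopping_time_const (T : nat) : stopping_time_in T T (fun _ => T).
Proof. split; [intro; lia | intros; tauto]. Qed.

Lemma stopping_time_max_S (T k : nat) (tau : Omega -> nat) : (k < T)%nat ->
  stopping_time_in T k tau -> stopping_time_in T (S k) (fun w => Nat.max (tau w) (S k)).
Proof.
  intros Hk [Hrange Hmeas]. split; [intro w; specialize (Hrange w); lia|].
  intros j w w' Hw. destruct (le_lt_dec (S k) j).
  - specialize (Hmeas j w w' Hw). split; intro; rewrite Nat.max_lub_iff in *; tauto.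
  - split; intro; lia.
Qed.

Lemma stopping_time_if (T k : nat) (P : Omega -> Prop) (P_dec : forall w, {P w} + {~ P w})
  (tau : Omega -> nat) : (k < T)%nat ->
  (forall w w', (forall i, (i < k)%nat -> w i = w' i) -> (P w <-> P w')) ->
  stopping_time_in T (S k) tau ->
  stopping_time_in T k (fun w => if P_dec w then tau w else k).
Proof.
  intros Hk HP [Hrange Hmeas]. split.
  - intro w. destruct (P_dec w); [specialize (Hrange w)|]; lia.
  - intros j w w' Hw. destruct (le_lt_dec k j).
    + assert (HPw : P w <-> P w') by (apply HP; intros; apply Hw; lia).
      destruct (P_dec w), (P_dec w'); try tauto. apply Hmeas, Hw.
    + pose proof (Hrange w); pose proof (Hrange w').
      destruct (P_dec w), (P_dec w'); split; intro; lia.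
Qed.

Lemma stopping_time_stopped_now (T k m : nat) (tau : Omega -> nat) (w w' : Omega) :
  stopping_time_in T k tau -> agree_outside k m w w' -> ((tau w <= k)%nat <-> (tau w' <= k)%nat).
Proof. intros [_ Hmeas] Hw. apply Hmeas. intros i Hi. symmetry. apply Hw. lia. Qed.

Section DynamicProgramming.

Variables (gamma : nat -> R) (T : nat) (I0 : R).
Hypothesis T_pos : (0 < T)%nat.
Hypothesis gamma_ge0 : forall l, (l < T)%nat -> 0 <= gamma l.
Hypothesis I0_sign : I0 = 1 \/ I0 = -1.

Let value (k : nat) (tau : Omega -> nat) (w : Omega) : R :=
  ExpFrom gamma (T - k) k (payoff I0 T k tau) w.

Let Iproc_agree (k m : nat) (w w' : Omega) :
  agree_outside k m w w' -> Iproc I0 k w' = Iproc I0 k w.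
Proof. intro Hw. apply Iproc_ext. intros i Hi. apply Hw. lia. Qed.

Lemma ExpFrom_continuation (k : nat) (w : Omega) :
  ExpFrom gamma 1 k
    (fun w => reward (Iproc I0 (S k) w) + Qfun gamma T (S k) (Iproc I0 (S k) w)) w
  = continuation gamma T k (Iproc I0 k w).
Proof. exact (ExpFrom_1_Iproc gamma I0 k (fun s => reward s + Qfun gamma T (S k) s) w). Qed.

Lemma ExpFrom_reward_plus (k : nat) (F : Omega -> R) (M : R) (w : Omega) :
  (k < T)%nat -> (forall w, Rabs (F w) <= M) ->
  ExpFrom gamma (T - k) k (fun w => reward (Iproc I0 (S k) w) + F w) w
  = ExpFrom gamma 1 k
      (fun w => reward (Iproc I0 (S k) w) + ExpFrom gamma (T - S k) (S k) F w) w.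
Proof.
  intros Hk HF. replace (T - k)%nat with (1 + (T - S k))%nat by lia.
  rewrite ExpFrom_add. apply ExpFrom_ext. intros w' _. rewrite Nat.add_1_r.
  rewrite (ExpFrom_plus gamma _ _ _ _ 1 M);
    [| intros i Hi; apply gamma_ge0; lia | intro; apply reward_abs_le | exact HF].
  f_equal. rewrite <- (ExpFrom_const gamma (T - S k) (S k) (reward (Iproc I0 (S k) w')) w').
  apply ExpFrom_ext. intros w'' Hw''. f_equal. exact (Iproc_agree _ _ _ _ Hw'').
Qed.

Lemma value_stopped (k : nat) (tau : Omega -> nat) (w : Omega) :
  (forall w', agree_outside k (T - k) w w' -> (tau w' <= k)%nat) -> value k tau w = 0.
Proof.
  intro Hstop. unfold value. rewrite <- (ExpFrom_const gamma (T - k) k 0 w).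
  apply ExpFrom_ext. intros w' Hw'. apply payoff_stopped, Hstop, Hw'.
Qed.

(* tau need not exceed k off the current F_k-atom; tau' is the rule to which the
   induction hypothesis at k+1 is applied. *)
Lemma value_continue (k : nat) (tau tau' : Omega -> nat) (w : Omega) : (k < T)%nat ->
  (forall w', (S k <= tau' w')%nat) ->
  (forall w', agree_outside k (T - k) w w' -> tau w' = tau' w') ->
  value k tau w
  = ExpFrom gamma 1 k (fun w => reward (Iproc I0 (S k) w) + value (S k) tau' w) w.
Proof.
  intros Hk Hcont Htau. unfold value.
  rewrite (ExpFrom_ext gamma _ _ _
             (fun w' => reward (Iproc I0 (S k) w') + payoff I0 T (S k) tau' w')).
  - apply (ExpFrom_reward_plus _ _ (INR T)); [exact Hk | intro; apply payoff_abs_le].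
  - intros w' Hw'. rewrite (payoff_stop_ext _ _ _ tau tau' _ (Htau w' Hw')), payoff_cons by exact Hk.
    specialize (Hcont w'). destruct (Nat.leb_spec (S k) (tau' w')); [|lia].
    unfold Defs.ind. ring.
Qed.

Let value_abs_le (k : nat) (tau : Omega -> nat) (w : Omega) : Rabs (value k tau w) <= INR T.
Proof.
  apply ExpFrom_abs_le; [intros i Hi; apply gamma_ge0; lia | intro; apply payoff_abs_le].
Qed.

Lemma value_le_Qfun (k : nat) (tau : Omega -> nat) (w : Omega) : (k <= T)%nat ->
  stopping_time_in T k tau -> value k tau w <= Qfun gamma T k (Iproc I0 k w).
Proof.
  remember (T - k)%nat as d eqn:Hd. revert k tau w Hd.
  induction d as [|d IH]; intros k tau w Hd Hk Htau.
  - rewrite value_stopped; [apply (Qfun_ge0 gamma T T_pos gamma_ge0)|].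
    intros w' _. destruct Htau as [Hrange _]. specialize (Hrange w'). lia.
  - destruct (le_lt_dec (tau w) k) as [Hle | Hlt].
    + rewrite value_stopped; [apply (Qfun_ge0 gamma T T_pos gamma_ge0)|].
      intros w' Hw'. exact (proj1 (stopping_time_stopped_now _ _ _ _ _ _ Htau Hw') Hle).
    + set (tau' := fun w => Nat.max (tau w) (S k)).
      rewrite (value_continue k tau tau'); [| lia | intro; unfold tau'; lia |].
      2:{ intros w' Hw'. unfold tau'.
          pose proof (stopping_time_stopped_now _ _ _ _ _ _ Htau Hw'). lia. }
      rewrite (Qfun_bellman gamma T T_pos gamma_ge0) by first [lia | apply Iproc_sign, I0_sign].
      rewrite <- ExpFrom_continuation. eapply Rle_trans; [|apply Rmax_r].
      pose proof (Qaux_ge0 gamma T T_pos gamma_ge0 (T - S k)).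
      apply (ExpFrom_1_le gamma k _ _ (1 + INR T)
               (1 + (fst (Qaux gamma T (T - S k)) + snd (Qaux gamma T (T - S k))))).
      * apply gamma_ge0. lia.
      * intro w'. eapply Rle_trans; [apply Rabs_triang|].
        pose proof (reward_abs_le (Iproc I0 (S k) w')). pose proof (value_abs_le (S k) tau' w'). lra.
      * intro w'. eapply Rle_trans; [apply Rabs_triang|].
        pose proof (reward_abs_le (Iproc I0 (S k) w')).
        pose proof (Qfun_abs_le gamma T T_pos gamma_ge0 (S k) (Iproc I0 (S k) w')). lra.
      * intro w'. apply Rplus_le_compat_l, IH; [lia | lia |].
        apply stopping_time_max_S; [lia | exact Htau].
Qed.

Lemma value_attains_Qfun (k : nat) : (k <= T)%nat ->
  exists tau, stopping_time_in T k tau /\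
              forall w, value k tau w = Qfun gamma T k (Iproc I0 k w).
Proof.
  remember (T - k)%nat as d eqn:Hd. revert k Hd.
  induction d as [|d IH]; intros k Hd Hk.
  - assert (k = T) by lia. subst k. exists (fun _ => T).
    split; [apply stopping_time_const|]. intro w.
    rewrite Qfun_T. apply value_stopped. intros; lia.
  - destruct (IH (S k)) as [tau1 [Htau1 Hval1]]; [lia | lia |].
    pose proof (proj1 Htau1) as Hrange1.
    exists (fun w => if Rlt_dec 0 (continuation gamma T k (Iproc I0 k w)) then tau1 w else k).
    split.
    + apply stopping_time_if; [lia | | exact Htau1].
      intros w w' Hw. rewrite (Iproc_ext I0 k w w' Hw). tauto.
    + intro w. rewrite (Qfun_bellman gamma T T_pos gamma_ge0) by first [lia | apply Iproc_sign, I0_sign].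
      destruct (Rlt_dec 0 (continuation gamma T k (Iproc I0 k w))) as [Hgo | Hstop].
      * rewrite (value_continue k _ tau1); [| lia | intro w'; apply Hrange1 |].
        -- rewrite (ExpFrom_ext gamma 1 k _
                      (fun w => reward (Iproc I0 (S k) w) + Qfun gamma T (S k) (Iproc I0 (S k) w)))
             by (intros; rewrite Hval1; reflexivity).
           rewrite ExpFrom_continuation, Rmax_right; lra.
        -- intros w' Hw'. rewrite (Iproc_agree _ _ _ _ Hw').
           destruct (Rlt_dec _ _); [reflexivity | contradiction].
      * rewrite value_stopped, Rmax_left; [reflexivity | lra |].
        intros w' Hw'. rewrite (Iproc_agree _ _ _ _ Hw').
        destruct (Rlt_dec _ _); [contradiction | lia].
Qed.

End DynamicProgramming.

Definition prefix (k : nat) (h : Omega) : Omega :=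
  fun i => if Nat.ltb i k then h i else 0%nat.

(* Integrating the first k coordinates last, the atom pins them to h, so the
   inner integral is evaluated at prefix k h. *)
Lemma Expect_mul_atom (gamma : nat -> R) (T k : nat) (h : Omega) (X : Omega -> R) :
  (k <= T)%nat ->
  Expect gamma T (fun w => X w * atom k h w)
  = ExpFrom gamma (T - k) k X (prefix k h) * ExpFrom gamma k 0 (atom k h) (fun _ => 0%nat).
Proof.
  intro Hk. unfold Expect. replace T with (k + (T - k))%nat at 1 by lia.
  rewrite ExpFrom_add, <- ExpFrom_scal_l. cbn [Nat.add].
  apply ExpFrom_ext. intros w' Hw'.
  rewrite (ExpFrom_ext gamma _ _ _ (fun w => atom k h w' * X w)).
  2:{ intros w'' Hw''. rewrite (atom_ext k h w'' w'); [ring|].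
      intros i Hi. apply Hw''. lia. }
  rewrite ExpFrom_scal_l.
  destruct (Req_dec (atom k h w') 0) as [E | Hn]; [rewrite E; ring|].
  replace w' with (prefix k h); [ring|].
  extensionality i. unfold prefix. destruct (Nat.ltb_spec i k).
  - symmetry. apply (atom_neq0 k h w' Hn). assumption.
  - rewrite Hw' by lia. reflexivity.
Qed.

Lemma CondExp_atom (gamma : nat -> R) (T k : nat) (h : Omega) (X : Omega -> R) :
  (k <= T)%nat -> Expect gamma T (atom k h) <> 0 ->
  CondExp gamma T k X h = ExpFrom gamma (T - k) k X (prefix k h).
Proof.
  intros Hk Hpos. unfold CondExp.
  assert (Hatom : Expect gamma T (atom k h) = ExpFrom gamma k 0 (atom k h) (fun _ => 0%nat)).
  { transitivity (Expect gamma T (fun w => 1 * atom k h w)).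
    - unfold Expect. apply ExpFrom_ext. intros. ring.
    - rewrite Expect_mul_atom, ExpFrom_const by exact Hk. ring. }
  rewrite Expect_mul_atom, <- Hatom by exact Hk. field. exact Hpos.
Qed.

Theorem lemma5p3 (T : nat) (gamma : nat -> R) (I0 : R) :
  (0 < T)%nat ->
  (forall l, (l < T)%nat -> 0 <= gamma l) ->
  (I0 = 1 \/ I0 = -1) ->
  (forall k, (k < T)%nat -> Qfun gamma T k (-1) > 0) /\
  (forall (k : nat) (h : Omega), (k <= T)%nat ->
     Expect gamma T (atom k h) > 0 ->
     is_lub
       (fun q => exists tau, stopping_time_in T k tau /\
                   q = CondExp gamma T k (payoff I0 T k tau) h)
       (Qfun gamma T k (Iproc I0 k h))).
Proof.
  intros T_pos gamma_ge0 I0_sign. split.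
  - intros k Hk. apply Qfun_m1_pos; assumption.
  - intros k h Hk Hatom.
    assert (Hprefix : Iproc I0 k (prefix k h) = Iproc I0 k h).
    { apply Iproc_ext. intros i Hi. unfold prefix. destruct (Nat.ltb_spec i k); [reflexivity | lia]. }
    split.
    + intros q [tau [Htau ->]].
      rewrite CondExp_atom, <- Hprefix by (assumption || lra).
      apply value_le_Qfun; assumption.
    + intros b Hb. apply Hb.
      destruct (value_attains_Qfun gamma T I0 T_pos gamma_ge0 I0_sign k Hk) as [tau [Htau Hval]].
      exists tau. split; [exact Htau|].
      rewrite CondExp_atom, Hval, Hprefix by (assumption || lra). reflexivity.
Qed.
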